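(* Let $G$ be a connected, simple, undirected graph with infinitely many vertices. Then for every integer $\ell\geq 2$, every $\{\ell\}$-resolving set of $G$ is infinite (i.e. $\beta_\ell(G)=\infty$), and for every integer $\ell\geq 1$, every $\ell$-solid-resolving set of $G$ is infinite (i.e. $\beta_\ell^s(G)=\infty$).
   Context: $d$ is the shortest-path distance; for nonempty $X\subseteq V(G)$, $d(s,X)=\min_{x\in X}d(s,x)$; for $S\subseteq V(G)$, $\mathcal{D}_S(X)$ is the family $(d(s,X))_{s\in S}$. $S$ is an $\{\ell\}$-resolving set if $\mathcal{D}_S(X)\neq\mathcal{D}_S(Y)$ for all distinct nonempty $X,Y\subseteq V(G)$ with $|X|\leq\ell$, $|Y|\leq\ell$; $S$ is an $\ell$-solid-resolving set if $\mathcal{D}_S(X)\neq\mathcal{D}_S(Y)$ for all distinct nonempty $X,Y\subseteq V(G)$ with $|X|\leq \ell$ ($Y$ arbitrary). $\beta_\ell(G)$ and $\beta_\ell^s(G)$ denote the minimum cardinalities of such sets. *)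

From Stdlib Require Import Arith List.

Section Graphs.
Variable V : Type.
Variable adj : V -> V -> Prop.

Definition simple_graph : Prop :=
  (forall x y, adj x y -> adj y x) /\ (forall x, ~ adj x x).

Definition walk (n : nat) (x y : V) : Prop :=
  exists f : nat -> V, f 0 = x /\ f n = y /\
    forall i, i < n -> adj (f i) (f (S i)).

Definition connected : Prop := forall x y, exists n, walk n x y.

Definition dist_is (x y : V) (n : nat) : Prop :=
  walk n x y /\ forall m, walk m x y -> n <= m.

Definition finite_set (A : V -> Prop) : Prop :=
  exists l : list V, forall x, A x -> In x l.

Definition infinite_graph : Prop := ~ finite_set (fun _ => True).

Definition card_le (A : V -> Prop) (k : nat) : Prop :=
  exists l : list V, length l <= k /\ forall x, A x -> In x l.

Definition nonempty (A : V -> Prop) : Prop := exists x, A x.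

Definition same_set (A B : V -> Prop) : Prop := forall x, A x <-> B x.

Definition dist_set_is (s : V) (X : V -> Prop) (n : nat) : Prop :=
  (exists x, X x /\ dist_is s x n) /\
  (forall x m, X x -> dist_is s x m -> n <= m).

Definition same_dist_vectors (S X Y : V -> Prop) : Prop :=
  forall s, S s -> forall n, dist_set_is s X n <-> dist_set_is s Y n.

Definition l_resolving (l : nat) (S : V -> Prop) : Prop :=
  forall X Y : V -> Prop, nonempty X -> nonempty Y ->
    card_le X l -> card_le Y l -> ~ same_set X Y ->
    ~ same_dist_vectors S X Y.

Definition l_solid_resolving (l : nat) (S : V -> Prop) : Prop :=
  forall X Y : V -> Prop, nonempty X -> nonempty Y ->
    card_le X l -> ~ same_set X Y ->
    ~ same_dist_vectors S X Y.

End Graphs.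

(* Fix a finite S and list its elements s_1, ..., s_k.  By Dickson's lemma the
   vectors (d(s_1,x), ..., d(s_k,x)) of the infinitely many vertices x cannot
   form an antichain, so there are distinct x, y with d(s,x) <= d(s,y) for all
   s in S.  Then d(s,{x,y}) = d(s,x) = d(s,{x}) for every s in S: the sets {x}
   and {x,y}, of sizes 1 and 2, are not distinguished by S. *)

From Stdlib Require Import Arith List Lia Classical ClassicalEpsilon Wf_nat.

Section FiniteSets.
Variable A : Type.

Lemma finite_set_sub (P Q : A -> Prop) :
  (forall x, P x -> Q x) -> finite_set A Q -> finite_set A P.
Proof. intros HPQ [l Hl]. exists l; auto. Qed.

Lemma finite_set_or (P Q : A -> Prop) :
  finite_set A P -> finite_set A Q -> finite_set A (fun x => P x \/ Q x).
Proof.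
  intros [lP HP] [lQ HQ]. exists (lP ++ lQ).
  intros x [Px | Qx]; apply in_or_app; auto.
Qed.

Lemma infinite_set_nonempty (P : A -> Prop) : ~ finite_set A P -> exists x, P x.
Proof.
  intro HP. apply NNPP; intro Hno. apply HP. exists nil.
  intros x Px. apply Hno; eauto.
Qed.

Lemma infinite_set_other (P : A -> Prop) (x : A) :
  ~ finite_set A P -> exists y, P y /\ y <> x.
Proof.
  intro HP. apply NNPP; intro Hno. apply HP. exists (x :: nil).
  intros y Py. left. apply NNPP; intro Hyx. apply Hno; eauto.
Qed.

Lemma finite_fibers_finite_below (P : A -> Prop) (f : A -> nat) :
  (forall n, finite_set A (fun y => P y /\ f y = n)) ->
  forall N, finite_set A (fun y => P y /\ f y < N).
Proof.
  intros Hfib N. induction N as [|N IH].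
  - exists nil. intros y [_ Hy]. lia.
  - apply (finite_set_sub _ (fun y => (P y /\ f y < N) \/ (P y /\ f y = N))).
    + intros y [Py Hy]. destruct (Nat.eq_dec (f y) N); [right | left]; split; auto; lia.
    + apply finite_set_or; auto.
Qed.

Lemma dickson_infinite_cone (B : Type) (g : B -> A -> nat) (l : list B)
    (P : A -> Prop) :
  ~ finite_set A P ->
  exists x, P x /\
    ~ finite_set A (fun y => P y /\ forall s, In s l -> g s x <= g s y).
Proof.
  revert P. induction l as [|s l IH]; intros P HP.
  - destruct (infinite_set_nonempty P HP) as [x Px]. exists x; split; auto.
    intro Hcone. apply HP. revert Hcone. apply finite_set_sub.
    intros y Py. split; auto. intros s [].
  (* Either some fibre of g s in P is infinite and we recurse inside it, or all
     fibres are finite and only finitely many points lie below x in coordinate s. *)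
  - destruct (classic (exists n, ~ finite_set A (fun y => P y /\ g s y = n)))
      as [[n Hfib] | Hfib].
    + destruct (IH _ Hfib) as [x [[Px Hx] Hcone]]. exists x; split; auto.
      intro Hfin. apply Hcone. revert Hfin. apply finite_set_sub.
      intros y [[Py Hy] Hle]. split; auto.
      intros s' [<- | Hs']; auto; lia.
    + assert (Hfibs : forall n, finite_set A (fun y => P y /\ g s y = n)).
      { intro n. apply NNPP; eauto. }
      destruct (IH _ HP) as [x [Px Hcone]]. exists x; split; auto.
      intro Hfin. apply Hcone.
      apply (finite_set_sub _ (fun y =>
        (P y /\ forall s', In s' (s :: l) -> g s' x <= g s' y) \/
        (P y /\ g s y < g s x))).
      * intros y [Py Hle]. destruct (le_lt_dec (g s x) (g s y)).
        -- left. split; auto. intros s' [<- | Hs']; auto.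
        -- right. auto.
      * apply finite_set_or; auto. apply finite_fibers_finite_below; auto.
Qed.

Lemma card_le_single (x : A) (k : nat) : 1 <= k -> card_le A (fun z => z = x) k.
Proof. intro Hk. exists (x :: nil). split; [simpl; lia | intros z ->; now left]. Qed.

Lemma card_le_pair (x y : A) (k : nat) :
  2 <= k -> card_le A (fun z => z = x \/ z = y) k.
Proof.
  intro Hk. exists (x :: y :: nil).
  split; [simpl; lia | intros z [-> | ->]; simpl; auto].
Qed.

Lemma single_not_same_set_pair (x y : A) :
  x <> y -> ~ same_set A (fun z => z = x) (fun z => z = x \/ z = y).
Proof. intros Hxy Heq. apply Hxy. symmetry. apply Heq. now right. Qed.

End FiniteSets.

Section Distances.
Variable V : Type.
Variable adj : V -> V -> Prop.

Lemma dist_is_unique (x y : V) (n m : nat) :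
  dist_is V adj x y n -> dist_is V adj x y m -> n = m.
Proof.
  intros [Hn Hn_min] [Hm Hm_min].
  specialize (Hn_min m Hm). specialize (Hm_min n Hn). lia.
Qed.

Hypothesis conn : connected V adj.

Lemma dist_is_exists (x y : V) : exists n, dist_is V adj x y n.
Proof.
  destruct (dec_inh_nat_subset_has_unique_least_element (fun n => walk V adj n x y))
    as [n [[Hn Hn_min] _]].
  - intro n. apply classic.
  - apply conn.
  - exists n. split; auto.
Qed.

Definition dist (x y : V) : nat := epsilon (inhabits 0) (dist_is V adj x y).

Lemma dist_isE (x y : V) (n : nat) : dist_is V adj x y n <-> n = dist x y.
Proof.
  assert (Hdist : dist_is V adj x y (dist x y)).
  { unfold dist. apply epsilon_spec, dist_is_exists. }
  split.
  - intro Hn. apply (dist_is_unique x y); auto.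
  - intros ->. exact Hdist.
Qed.

Lemma dist_set_is_single (s x : V) (n : nat) :
  dist_set_is V adj s (fun z => z = x) n <-> n = dist s x.
Proof.
  split.
  - intros [[z [-> Hz]] _]. apply dist_isE; auto.
  - intros ->. split.
    + exists x. split; auto. apply dist_isE; auto.
    + intros z m -> Hm. apply dist_isE in Hm. lia.
Qed.

Lemma dist_set_is_pair (s x y : V) (n : nat) :
  dist s x <= dist s y ->
  dist_set_is V adj s (fun z => z = x \/ z = y) n <-> n = dist s x.
Proof.
  intro Hxy. split.
  - intros [[z [Hz Hn]] Hn_min]. apply dist_isE in Hn.
    specialize (Hn_min x (dist s x) (or_introl eq_refl)).
    rewrite dist_isE in Hn_min.
    destruct Hz as [-> | ->]; auto.
    specialize (Hn_min eq_refl). lia.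
  - intros ->. split.
    + exists x. split; auto. apply dist_isE; auto.
    + intros z m [-> | ->] Hm; apply dist_isE in Hm; lia.
Qed.

Lemma same_dist_vectors_dominated (S : V -> Prop) (x y : V) :
  (forall s, S s -> dist s x <= dist s y) ->
  same_dist_vectors V adj S (fun z => z = x) (fun z => z = x \/ z = y).
Proof.
  intros Hdom s Ss n.
  rewrite dist_set_is_single, dist_set_is_pair; auto. reflexivity.
Qed.

Lemma finite_set_unresolved_pair (S : V -> Prop) :
  infinite_graph V -> finite_set V S ->
  exists x y, x <> y /\
    same_dist_vectors V adj S (fun z => z = x) (fun z => z = x \/ z = y).
Proof.
  intros Hinf [lS HS].
  destruct (dickson_infinite_cone V V dist lS (fun _ => True) Hinf)
    as [x [_ Hcone]].
  destruct (infinite_set_other V _ x Hcone) as [y [[_ Hdom] Hyx]].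
  exists x, y. split; auto.
  apply same_dist_vectors_dominated. intros s Ss. apply Hdom, HS, Ss.
Qed.

End Distances.

Theorem mainTheorem7 (V : Type) (adj : V -> V -> Prop) :
  simple_graph V adj -> connected V adj -> infinite_graph V ->
  (forall (l : nat), 2 <= l -> forall S : V -> Prop,
      l_resolving V adj l S -> ~ finite_set V S) /\
  (forall (l : nat), 1 <= l -> forall S : V -> Prop,
      l_solid_resolving V adj l S -> ~ finite_set V S).
Proof.
  intros _ Hconn Hinf. split; intros l Hl S HS Hfin;
    destruct (finite_set_unresolved_pair V adj Hconn S Hinf Hfin)
      as [x [y [Hxy Hsame]]].
  - apply (HS (fun z => z = x) (fun z => z = x \/ z = y)); auto.
    + exists x; auto.
    + exists x; auto.
    + apply card_le_single. lia.
    + apply card_le_pair. lia.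
    + apply single_not_same_set_pair. exact Hxy.
  - apply (HS (fun z => z = x) (fun z => z = x \/ z = y)); auto.
    + exists x; auto.
    + exists x; auto.
    + apply card_le_single. lia.
    + apply single_not_same_set_pair. exact Hxy.
Qed.
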